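(* In the lower-bound type system (as defined in the context, which has no primitive contraction rule), for every signature $\Sigma$, annotated context $\Gamma$, variables $x,x_1,x_2\notin\mathrm{dom}(\Gamma)$ (with $x_1\neq x_2$), annotated types $A,B$, and $q,q'\in\mathbb Q_{\ge0}$: if $\Sigma;\Gamma,x_1:A,x_2:A\vdash^{q}_{q'}e:B$ is derivable, then $\Sigma;\Gamma,x:A\vdash^{q}_{q'}\mathrm{share}(x,(x_1,x_2).e):B$ is derivable.
   Context: Expressions (let-normal form; $x,x_i$ are variables, $f$ function identifiers): $e ::= () \mid \mathsf{true}\mid \mathsf{false}\mid n\mid x\mid \mathrm{op}_\diamond(x_1,x_2)\mid \mathrm{app}(f,x)\mid \mathrm{if}(x,e_t,e_f)\mid \mathrm{let}(x,e_1,x.e_2)\mid \mathrm{pair}(x_1,x_2)\mid \mathrm{match}(x,(x_1,x_2).e)\mid \mathsf{nil}\mid \mathrm{cons}(x_1,x_2)\mid\mathrm{match}(x,e_1,(x_h,x_t).e_2)\mid\mathrm{share}(x,(x_1,x_2).e)$, with $\diamond\in\{+,-,*,\mathrm{div},\mathrm{mod},=,<>,<,>,\mathrm{and},\mathrm{or}\}$. Fix arbitrary rational cost constants $K^{\mathrm{unit}},K^{\mathrm{bool}},K^{\mathrm{int}},K^{\mathrm{nil}},K^{\mathrm{var}},K^{\mathrm{op}},K^{\mathrm{app}},K^{\mathrm{let}},K^{\mathrm{cond}},K^{\mathrm{pair}},K^{\mathrm{matchP}},K^{\mathrm{cons}},K^{\mathrm{matchN}},K^{\mathrm{matchL}}$.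 Resource-annotated types: $A ::= \mathsf{unit}\mid\mathsf{bool}\mid\mathsf{int}\mid L^p(A)\mid A*A$ with $p\in\mathbb Q_{\ge0}$. An annotated context $\Gamma$ is a finite map from variables to annotated types; $\Gamma_1,\Gamma_2$ denotes the union of contexts with disjoint domains (contexts are unordered). Sharing relation: $\curlyvee(A\mid A,A)$ for $A\in\{\mathsf{unit},\mathsf{bool},\mathsf{int}\}$; $\curlyvee(A*B\mid A_1*B_1,A_2*B_2)$ if $\curlyvee(A\mid A_1,A_2)$ and $\curlyvee(B\mid B_1,B_2)$; $\curlyvee(L^p(A)\mid L^{p_1}(A_1),L^{p_2}(A_2))$ if $\curlyvee(A\mid A_1,A_2)$ and $p=p_1+p_2$. Subtyping $\preceq$: $A\preceq A$ for atoms; $L^{p_1}(A_1)\preceq L^{p_2}(A_2)$ if $A_1\preceq A_2$ and $p_1\le p_2$; $A_1*B_1\preceq A_2*B_2$ if $A_1\preceq A_2$ and $B_1\preceq B_2$. A signature $\Sigma$ maps function identifiers to nonempty sets of annotated function types $A_1\xrightarrow{q/q'}A_2$ ($q,q'\in\mathbb Q_{\ge0}$). Typing judgements $\Sigma;\Gamma\vdash^{q}_{q'}e:A$ with $q,q'\in\mathbb Q_{\ge0}$ (every annotation in a rule instance must be a nonnegative rational). Syntax-directed rules: $\Sigma;\emptyset\vdash^{K^{\mathrm{unit}}}_0():\mathsf{unit}$; $\Sigma;\emptyset\vdash^{K^{\mathrm{bool}}}_0 b:\mathsf{bool}$; $\Sigma;\emptyset\vdash^{K^{\mathrm{int}}}_0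 n:\mathsf{int}$; $\Sigma;\emptyset\vdash^{K^{\mathrm{nil}}}_0\mathsf{nil}:L^p(A)$; $\Sigma;x:A\vdash^{K^{\mathrm{var}}}_0x:A$; $\Sigma;x_1:\mathsf{bool},x_2:\mathsf{bool}\vdash^{K^{\mathrm{op}}}_0\mathrm{op}_\diamond(x_1,x_2):\mathsf{bool}$ for $\diamond\in\{\mathrm{and},\mathrm{or}\}$; $\Sigma;x_1:\mathsf{int},x_2:\mathsf{int}\vdash^{K^{\mathrm{op}}}_0\mathrm{op}_\diamond(x_1,x_2):\mathsf{bool}$ for comparisons and $:\mathsf{int}$ for $+,-,*,\mathrm{div},\mathrm{mod}$; if $A_1\xrightarrow{q/q'}A_2\in\Sigma(f)$ then $\Sigma;x:A_1\vdash^{q+K^{\mathrm{app}}}_{q'}\mathrm{app}(f,x):A_2$; from $\Sigma;\Gamma_1\vdash^{q-K^{\mathrm{let}}}_{q_1}e_1:A_1$ and $\Sigma;\Gamma_2,x:A_1\vdash^{q_1}_{q'}e_2:A_2$ infer $\Sigma;\Gamma_1,\Gamma_2\vdash^q_{q'}\mathrm{let}(x,e_1,x.e_2):A_2$; from $\Sigma;\Gamma\vdash^{q-K^{\mathrm{cond}}}_{q'}e_t:A$ and $\Sigma;\Gamma\vdash^{q-K^{\mathrm{cond}}}_{q'}e_f:A$ infer $\Sigma;\Gamma,x:\mathsf{bool}\vdash^q_{q'}\mathrm{if}(x,e_t,e_f):A$; $\Sigma;x_1:A_1,x_2:A_2\vdash^{K^{\mathrm{pair}}}_0\mathrm{pair}(x_1,x_2):A_1*A_2$;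 from $\Sigma;\Gamma,x_1:A_1,x_2:A_2\vdash^{q-K^{\mathrm{matchP}}}_{q'}e:A$ infer $\Sigma;\Gamma,x:A_1*A_2\vdash^q_{q'}\mathrm{match}(x,(x_1,x_2).e):A$; $\Sigma;x_h:A,x_t:L^p(A)\vdash^{p+K^{\mathrm{cons}}}_0\mathrm{cons}(x_h,x_t):L^p(A)$; from $\Sigma;\Gamma\vdash^{q-K^{\mathrm{matchN}}}_{q'}e_1:B$ and $\Sigma;\Gamma,x_h:A,x_t:L^p(A)\vdash^{q+p-K^{\mathrm{matchL}}}_{q'}e_2:B$ infer $\Sigma;\Gamma,x:L^p(A)\vdash^q_{q'}\mathrm{match}(x,e_1,(x_h,x_t).e_2):B$; from $\Sigma;\Gamma,x_1:A_1,x_2:A_2\vdash^q_{q'}e:B$ and $\curlyvee(A\mid A_1,A_2)$ infer $\Sigma;\Gamma,x:A\vdash^q_{q'}\mathrm{share}(x,(x_1,x_2).e):B$. Structural rules of the lower-bound system: (Relax) from $\Sigma;\Gamma\vdash^p_{p'}e:A$, $q\ge p$ and $q-p\le q'-p'$ infer $\Sigma;\Gamma\vdash^q_{q'}e:A$; (Weakening) from $\Sigma;\Gamma\vdash^q_{q'}e:B$ and $\curlyvee(A\mid A,A)$ infer $\Sigma;\Gamma,x:A\vdash^q_{q'}e:B$; (Subtype) from $\Sigma;\Gamma\vdash^q_{q'}e:A$ and $A\preceq B$ infer $\Sigma;\Gamma\vdash^q_{q'}e:B$; (Supertype) from $\Sigma;\Gamma,x:B\vdash^q_{q'}e:C$ and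 $A\preceq B$ infer $\Sigma;\Gamma,x:A\vdash^q_{q'}e:C$. *)

From HB Require Import structures.
From mathcomp Require Import all_boot all_order all_algebra.
Set Implicit Arguments. Unset Strict Implicit. Unset Printing Implicit Defensive.
Import Order.TTheory GRing.Theory Num.Theory.
Local Open Scope ring_scope.

Definition Qnn := {q : rat | 0 <= q}.

Definition var := nat.
Definition fid := nat.

Inductive binop :=
  | OAdd | OSub | OMul | ODiv | OMod
  | OEq | ONeq | OLt | OGt
  | OAnd | OOr.

Definition is_arith (o : binop) : bool :=
  match o with OAdd | OSub | OMul | ODiv | OMod => true | _ => false end.
Definition is_cmp (o : binop) : bool :=
  match o with OEq | ONeq | OLt | OGt => true | _ => false end.
Definition is_bool_op (o : binop) : bool :=
  match o with OAnd | OOr => true | _ => false end.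

(** Expressions in let-normal form. *)
Inductive expr :=
  | EUnit
  | EBool (b : bool)
  | EInt (n : int)
  | EVar (x : var)
  | EOp (o : binop) (x1 x2 : var)
  | EApp (f : fid) (x : var)
  | EIf (x : var) (et ef : expr)
  | ELet (x : var) (e1 e2 : expr)                (* let(x, e1, x.e2) *)
  | EPair (x1 x2 : var)
  | EMatchP (x x1 x2 : var) (e : expr)            (* match(x,(x1,x2).e) *)
  | ENil
  | ECons (xh xt : var)
  | EMatchL (x : var) (e1 : expr) (xh xt : var) (e2 : expr)
  | EShare (x x1 x2 : var) (e : expr).            (* share(x,(x1,x2).e) *)

Inductive ty :=
  | TUnit | TBool | TInt
  | TList (p : Qnn) (A : ty)
  | TPair (A B : ty).

Inductive share : ty -> ty -> ty -> Prop :=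
  | ShUnit : share TUnit TUnit TUnit
  | ShBool : share TBool TBool TBool
  | ShInt  : share TInt TInt TInt
  | ShPair A B A1 B1 A2 B2 :
      share A A1 A2 -> share B B1 B2 ->
      share (TPair A B) (TPair A1 B1) (TPair A2 B2)
  | ShList (p p1 p2 : Qnn) A A1 A2 :
      share A A1 A2 -> val p = val p1 + val p2 ->
      share (TList p A) (TList p1 A1) (TList p2 A2).

Inductive subty : ty -> ty -> Prop :=
  | SubUnit : subty TUnit TUnit
  | SubBool : subty TBool TBool
  | SubInt  : subty TInt TInt
  | SubList (p1 p2 : Qnn) A1 A2 :
      subty A1 A2 -> val p1 <= val p2 -> subty (TList p1 A1) (TList p2 A2)
  | SubPair A1 B1 A2 B2 :
      subty A1 A2 -> subty B1 B2 -> subty (TPair A1 B1) (TPair A2 B2).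

Record funty := FunTy { fty_arg : ty; fty_q : Qnn; fty_q' : Qnn; fty_res : ty }.
Definition signature := fid -> funty -> Prop.
Definition sig_nonempty (S : signature) : Prop := forall f, exists t, S f t.

Definition ctx := var -> option ty.
Definition cempty : ctx := fun _ => None.
Definition csing (x : var) (A : ty) : ctx :=
  fun v => if v == x then Some A else None.
Definition cunion (G1 G2 : ctx) : ctx :=
  fun v => match G1 v with Some a => Some a | None => G2 v end.
Definition cdisjoint (G1 G2 : ctx) : Prop := forall v, G1 v = None \/ G2 v = None.
Definition fresh (G : ctx) (x : var) : Prop := G x = None.
(** Γ, x:A  (used only together with the side condition [fresh Γ x]). *)
Definition cext (G : ctx) (x : var) (A : ty) : ctx := cunion G (csing x A).
Definition ctx_finite (G : ctx) : Prop :=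
  exists s : seq var, forall v, G v <> None -> v \in s.

Record costs := Costs {
  Kunit : rat; Kbool : rat; Kint : rat; Knil : rat; Kvar : rat; Kop : rat;
  Kapp : rat; Klet : rat; Kcond : rat; Kpair : rat; KmatchP : rat;
  Kcons : rat; KmatchN : rat; KmatchL : rat }.

(** All annotations are
    nonnegative rationals (elements of [Qnn]); arithmetic side conditions
    such as "q - K^let" are expressed as equations on the underlying rats. *)
Inductive typed (K : costs) (S : signature) : ctx -> Qnn -> Qnn -> expr -> ty -> Prop :=
  | T_Unit (q q' : Qnn) :
      val q = Kunit K -> val q' = 0 -> typed K S cempty q q' EUnit TUnit
  | T_Bool (q q' : Qnn) b :
      val q = Kbool K -> val q' = 0 -> typed K S cempty q q' (EBool b) TBool
  | T_Int (q q' : Qnn) n :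
      val q = Kint K -> val q' = 0 -> typed K S cempty q q' (EInt n) TInt
  | T_Nil (q q' : Qnn) p A :
      val q = Knil K -> val q' = 0 -> typed K S cempty q q' ENil (TList p A)
  | T_Var (q q' : Qnn) x A :
      val q = Kvar K -> val q' = 0 -> typed K S (csing x A) q q' (EVar x) A
  | T_OpBool (q q' : Qnn) o x1 x2 :
      is_bool_op o -> x1 <> x2 -> val q = Kop K -> val q' = 0 ->
      typed K S (cext (csing x1 TBool) x2 TBool) q q' (EOp o x1 x2) TBool
  | T_OpCmp (q q' : Qnn) o x1 x2 :
      is_cmp o -> x1 <> x2 -> val q = Kop K -> val q' = 0 ->
      typed K S (cext (csing x1 TInt) x2 TInt) q q' (EOp o x1 x2) TBool
  | T_OpArith (q q' : Qnn) o x1 x2 :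
      is_arith o -> x1 <> x2 -> val q = Kop K -> val q' = 0 ->
      typed K S (cext (csing x1 TInt) x2 TInt) q q' (EOp o x1 x2) TInt
  | T_App (q q' : Qnn) f x A1 A2 (qf qf' : Qnn) :
      S f (FunTy A1 qf qf' A2) -> val q = val qf + Kapp K -> q' = qf' ->
      typed K S (csing x A1) q q' (EApp f x) A2
  | T_Let (q q1 q2 q' : Qnn) G1 G2 x e1 e2 A1 A2 :
      val q1 = val q - Klet K ->
      typed K S G1 q1 q2 e1 A1 ->
      fresh G2 x -> typed K S (cext G2 x A1) q2 q' e2 A2 ->
      cdisjoint G1 G2 ->
      typed K S (cunion G1 G2) q q' (ELet x e1 e2) A2
  | T_If (q q1 q' : Qnn) G x et ef A :
      val q1 = val q - Kcond K ->
      typed K S G q1 q' et A -> typed K S G q1 q' ef A ->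
      fresh G x ->
      typed K S (cext G x TBool) q q' (EIf x et ef) A
  | T_Pair (q q' : Qnn) x1 x2 A1 A2 :
      x1 <> x2 -> val q = Kpair K -> val q' = 0 ->
      typed K S (cext (csing x1 A1) x2 A2) q q' (EPair x1 x2) (TPair A1 A2)
  | T_MatchP (q q1 q' : Qnn) G x x1 x2 e A1 A2 A :
      val q1 = val q - KmatchP K ->
      fresh G x1 -> fresh G x2 -> x1 <> x2 ->
      typed K S (cext (cext G x1 A1) x2 A2) q1 q' e A ->
      fresh G x ->
      typed K S (cext G x (TPair A1 A2)) q q' (EMatchP x x1 x2 e) A
  | T_Cons (q q' : Qnn) p xh xt A :
      xh <> xt -> val q = val p + Kcons K -> val q' = 0 ->
      typed K S (cext (csing xh A) xt (TList p A)) q q' (ECons xh xt) (TList p A)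
  | T_MatchL (q q1 q2 q' : Qnn) (p : Qnn) G x e1 xh xt e2 A B :
      val q1 = val q - KmatchN K ->
      val q2 = val q + val p - KmatchL K ->
      typed K S G q1 q' e1 B ->
      fresh G xh -> fresh G xt -> xh <> xt ->
      typed K S (cext (cext G xh A) xt (TList p A)) q2 q' e2 B ->
      fresh G x ->
      typed K S (cext G x (TList p A)) q q' (EMatchL x e1 xh xt e2) B
  | T_Share (q q' : Qnn) G x x1 x2 e A A1 A2 B :
      fresh G x1 -> fresh G x2 -> x1 <> x2 ->
      typed K S (cext (cext G x1 A1) x2 A2) q q' e B ->
      share A A1 A2 -> fresh G x ->
      typed K S (cext G x A) q q' (EShare x x1 x2 e) B
  | T_Relax (p p' q q' : Qnn) G e A :
      typed K S G p p' e A -> val p <= val q ->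
      val q - val p <= val q' - val p' ->
      typed K S G q q' e A
  | T_Weak (q q' : Qnn) G x e A B :
      typed K S G q q' e B -> share A A A -> fresh G x ->
      typed K S (cext G x A) q q' e B
  | T_Subtype (q q' : Qnn) G e A B :
      typed K S G q q' e A -> subty A B -> typed K S G q q' e B
  | T_Supertype (q q' : Qnn) G x e A B C :
      fresh G x -> typed K S (cext G x B) q q' e C -> subty A B ->
      typed K S (cext G x A) q q' e C.

(* Since subtyping may lower list annotations on hypotheses, the second copy
   of [x] need not carry any potential: [A] shares as [A] and its zero-annotated
   version [zero_annot A], and the premise for [x2 : A] yields one for
   [x2 : zero_annot A] by the supertype rule, because [zero_annot A <= A]. *)
From HB Require Import structures.
From mathcomp Require Import all_boot all_order all_algebra.
Import Order.TTheory GRing.Theory Num.Theory.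
Local Open Scope ring_scope.

Definition qnn0 : Qnn := exist _ 0 (lexx (0 : rat)).

Fixpoint zero_annot (A : ty) : ty :=
  match A with
  | TList _ A => TList qnn0 (zero_annot A)
  | TPair A B => TPair (zero_annot A) (zero_annot B)
  | t => t
  end.

Lemma share_zero_annot (A : ty) : share A A (zero_annot A).
Proof.
elim: A => /=; try by constructor.
by move=> p A IH; constructor; rewrite //= addr0.
Qed.

Lemma subty_zero_annot (A : ty) : subty (zero_annot A) A.
Proof.
elim: A => /=; try by constructor.
by move=> p A IH; constructor; last exact: valP.
Qed.

Lemma fresh_cext (G : ctx) (x y : var) (A : ty) :
  fresh G y -> x <> y -> fresh (cext G x A) y.
Proof.
move=> Gy xy; rewrite /fresh /cext /cunion Gy /csing.
by case: eqP => // yx; case: xy.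
Qed.

Theorem lemma5 (K : costs) (S : signature) (G : ctx) (x x1 x2 : var)
    (A B : ty) (q q' : Qnn) (e : expr) :
  sig_nonempty S -> ctx_finite G ->
  fresh G x -> fresh G x1 -> fresh G x2 -> x1 <> x2 ->
  typed K S (cext (cext G x1 A) x2 A) q q' e B ->
  typed K S (cext G x A) q q' (EShare x x1 x2 e) B.
Proof.
move=> _ _ Gx Gx1 Gx2 x12 He.
apply: (T_Share (A1 := A) (A2 := zero_annot A)) => //; last first.
  exact: share_zero_annot.
apply: T_Supertype He (subty_zero_annot A).
exact: fresh_cext.
Qed.
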